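(* Let $T$ be a non-star tree and $x$ a vertex of $T$ with neighbors $x_1,\dots,x_n$, $n\ge 2$. Suppose that for $i=1,\dots,p$, where $1\le p<n$, there exists a $(T_{(x_i,x)},x_i)$-well 2-placement. Let $T'$ be the connected component containing $x$ in $T-\{xx_i: i=1,\dots,p\}$. If there exists a $(T',z)$-well 2-placement $\sigma$ with $dist(x,\sigma(x))\le 3$, where $z$ is a vertex of $T'$, then there exists a $(T,z)$-well 2-placement $\sigma_z$ with $\sigma_z(v)=\sigma(v)$ for every $v\in V(T')$.
   Context: All graphs are finite, simple and undirected. A non-star tree is a tree not isomorphic to a star $K_{1,m}$ for any $m\ge0$. For an edge $ab$ of a tree $T$, $T_{(a,b)}$ denotes the connected component containing $a$ in $T-\{ab\}$. For a tree $S$, a permutation $\sigma$ of $V(S)$ is a 2-placement of $S$ if $\sigma(a)\sigma(b)\notin E(S)$ for every edge $ab\in E(S)$; $\sigma(S)\subseteq S^k$ means $dist_S(\sigma(a),\sigma(b))\le k$ for every edge $ab$ of $S$. For a non-star tree $S$ and vertex $w$, a fixed-point-free permutation $\sigma$ of $V(S)$ is an $(S,w)$-well 2-placement if (distances and degrees taken in $S$): (1) $\sigma$ is a 2-placement of $S$; (2) $\sigma(S)\subseteq S^6$; (3) $dist(w,\sigma(w))\le 2$; (4) $dist(y,\sigma(y))\le 3$ for every neighbor $y$ of $w$; (5) $dist(y,\sigma(y))\le 4$ for every $y$ of degree $1$; (6) every cycle of $\sigma$ (in its disjoint cycle decomposition) has length at most $5$. *)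

From HB Require Import structures.
From mathcomp Require Import all_boot all_fingroup.
Set Implicit Arguments. Unset Strict Implicit. Unset Printing Implicit Defensive.

Section Defs.
Variable V : finType.

Definition ind (e : rel V) (A : {set V}) : rel V :=
  fun u v => [&& u \in A, v \in A & e u v].

Definition dist_le (e : rel V) (A : {set V}) (k : nat) (u v : V) : Prop :=
  u \in A /\ exists p : seq V, [/\ path (ind e A) u p, last u p = v & size p <= k].

Definition deg (e : rel V) (A : {set V}) (u : V) : nat := #|[set y | ind e A u y]|.

Definition is_tree (e : rel V) (A : {set V}) : Prop :=
  [/\ A != set0,
      {in A &, forall u v, connect (ind e A) u v} &
      forall c : seq V, uniq c -> 2 < size c -> ~~ path.cycle (ind e A) c].

(* The tree on A is a star K_{1,m} (m >= 0): some center c in A is an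
   endpoint of every edge. *)
Definition is_star (e : rel V) (A : {set V}) : Prop :=
  exists2 c, c \in A & forall u v, ind e A u v -> u = c \/ v = c.

Definition nonstar_tree (e : rel V) (A : {set V}) : Prop :=
  is_tree e A /\ ~ is_star e A.

(* (S,w)-well 2-placement, S the induced subgraph on A; a permutation of V(S)
   is represented by a permutation of V supported on A. *)
Definition well2 (e : rel V) (A : {set V}) (w : V) (s : {perm V}) : Prop :=
  nonstar_tree e A /\ w \in A /\ perm_on A s /\
  {in A, forall y, s y != y} /\
  (forall a b, ind e A a b -> ~~ ind e A (s a) (s b)) /\
  (forall a b, ind e A a b -> dist_le e A 6 (s a) (s b)) /\
  dist_le e A 2 w (s w) /\
  (forall y, ind e A w y -> dist_le e A 3 y (s y)) /\
  (forall y, y \in A -> deg e A y = 1 -> dist_le e A 4 y (s y)) /\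
  {in A, forall y, #|porbit s y| <= 5}.

Definition rem_edge (e : rel V) (a b : V) : rel V :=
  fun u v => e u v && ~~ (((u == a) && (v == b)) || ((u == b) && (v == a))).

Definition rem_edges (e : rel V) (x : V) (X : {set V}) : rel V :=
  fun u v => e u v && ~~ (((u == x) && (v \in X)) || ((v == x) && (u \in X))).

Definition component (f : rel V) (v : V) : {set V} := [set y | connect f v y].

End Defs.

From mathcomp Require Import all_boot all_fingroup.
Set Implicit Arguments. Unset Strict Implicit. Unset Printing Implicit Defensive.

(* Removing the edges x x_i (x_i in X) cuts the tree T into the
   core T' (the component of x) and the branches T_(x_i,x), one for each
   x_i in X.  Since every edge of a tree is a bridge, these pieces are
   pairwise disjoint, cover V, and every edge of T lies inside one piece
   except the cut edges x x_i themselves.  We glue the given well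
   2-placement s of T' with well 2-placements F x_i of the branches into a
   single permutation of V.  Every condition of a well 2-placement is local
   to an edge or a vertex, so it transfers from the pieces (inside-piece
   distances only grow in T, degrees of non-endpoints of cut edges are
   unchanged, cycles stay inside a piece).  The only new edges to check are
   the cut edges x x_i, whose images s(x), F x_i (x_i) lie in different
   pieces (hence are non-adjacent) and are at distance
   <= 3 + 1 + 2 = 6 in T. *)

Section Distances.
Variables (V : finType) (e : rel V).

Lemma ind_setT : ind e [set: V] =2 e.
Proof. by move=> u w; rewrite /ind !in_setT. Qed.

Lemma ind_in (A : {set V}) u w : u \in A -> w \in A -> ind e A u w = e u w.
Proof. by rewrite /ind => -> ->. Qed.

Lemma dist_le_widen (A : {set V}) k k' u v :
  k <= k' -> dist_le e A k u v -> dist_le e [set: V] k' u v.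
Proof.
move=> le_kk' [_ [p [Hp Hl Hs]]]; split; first by rewrite in_setT.
exists p; split=> //; last exact: leq_trans le_kk'.
by apply: sub_path Hp => a b /and3P[_ _ h]; rewrite ind_setT.
Qed.

Lemma dist_le_edge u v : e u v -> dist_le e [set: V] 1 u v.
Proof.
by move=> euv; split; [rewrite in_setT | exists [:: v]; rewrite /= ind_setT euv].
Qed.

Lemma dist_le_trans k1 k2 u v w :
  dist_le e [set: V] k1 u v -> dist_le e [set: V] k2 v w ->
  dist_le e [set: V] (k1 + k2) u w.
Proof.
move=> [_ [p [Hp Hl Hs]]] [_ [q [Hq Hm Ht]]]; split; first by rewrite in_setT.
exists (p ++ q); split; first by rewrite cat_path Hp Hl.
  by rewrite last_cat Hl.
by rewrite size_cat leq_add.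
Qed.

Lemma deg_closed (A : {set V}) y :
  y \in A -> (forall w, e y w -> w \in A) -> deg e A y = deg e [set: V] y.
Proof.
move=> yA nbrA; apply: eq_card => w; rewrite !inE ind_setT /ind yA /=.
by case ey: (e y w); rewrite ?andbF ?andbT ?nbrA.
Qed.

Hypothesis e_sym : symmetric e.

Lemma dist_le_sym k u v : dist_le e [set: V] k u v -> dist_le e [set: V] k v u.
Proof.
move=> [_ [p [Hp Hl Hs]]]; split; first by rewrite in_setT.
exists (rev (belast u p)); split.
- by rewrite -Hl rev_path; apply: sub_path Hp => a b; rewrite !ind_setT e_sym.
- rewrite -Hl; case/lastP: p {Hp Hl Hs} => //= q y.
  by rewrite belast_rcons last_rcons rev_cons last_rcons.
- by rewrite size_rev size_belast.
Qed.

End Distances.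

Definition del_vertex (V : finType) (e : rel V) (x : V) : rel V :=
  [rel u w | [&& e u w, u != x & w != x]].

Lemma del_vertex_sym (V : finType) (e : rel V) x :
  symmetric e -> symmetric (del_vertex e x).
Proof. by move=> e_sym u w; rewrite /del_vertex /= e_sym [(u != x) && _]andbC. Qed.

Lemma path_del_vertex (V : finType) (e : rel V) x a p :
  path e a p -> x \notin a :: p -> path (del_vertex e x) a p.
Proof.
elim: p a => //= y q IH a /andP[eay Hq].
rewrite in_cons negb_or => /andP[xa Hx]; rewrite (IH y Hq Hx) andbT /del_vertex /=.
by move: Hx; rewrite in_cons negb_or eay (eq_sym a) xa (eq_sym y) => /andP[-> _].
Qed.

Lemma rem_edge_sym (V : finType) (e : rel V) a b :
  symmetric e -> symmetric (rem_edge e a b).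
Proof.
move=> e_sym u w; rewrite /rem_edge e_sym; congr (_ && ~~ _).
by rewrite [(w == a) && _]andbC [(w == b) && _]andbC orbC.
Qed.

Section Trees.
Variables (V : finType) (e : rel V).
Hypotheses (e_sym : symmetric e) (e_irr : irreflexive e) (e_tree : is_tree e [set: V]).

Lemma tree_connect u v : connect e u v.
Proof.
case: e_tree => _ e_conn _; apply: connect_sub (e_conn u v (in_setT u) (in_setT v)).
by move=> a b h; apply: connect1; rewrite -ind_setT.
Qed.

(* Every edge of a tree is a bridge: a shortest a-b walk avoiding the edge
   ab would close a cycle with it. *)
Lemma tree_bridge a b : e a b -> ~ connect (rem_edge e a b) a b.
Proof.
case: e_tree => _ _ no_cycle eab /connectP [p Hp Hl].
move: Hl; case: (shortenP Hp) => p' Hp' Hu _ Hl.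
apply: (negP (no_cycle (a :: p') Hu _)).
  case: p' Hp' Hu Hl => [|y [|y' q]] //=.
  - by move=> _ _ Hl; move: eab; rewrite Hl e_irr.
  - by move=> /andP[h _] _ Hl; move: h; rewrite Hl /rem_edge !eqxx /= andbF.
rewrite /= rcons_path -Hl ind_setT e_sym eab andbT.
by apply: sub_path Hp' => u w /andP[h _]; rewrite ind_setT.
Qed.

End Trees.

Lemma porbit_agree (V : finType) (B : {set V}) (s t : {perm V}) y :
  perm_on B s -> {in B, forall v, t v = s v} -> y \in B -> porbit t y = porbit s y.
Proof.
move=> s_on agree yB.
have iterE n : iter n t y = iter n s y /\ iter n s y \in B.
  by elim: n => [|n [IH1 IH2]] //=; rewrite IH1 agree // perm_closed.
by apply/setP => w; apply/porbitP/porbitP => -[i ->]; exists i;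
  rewrite !permX (proj1 (iterE i)).
Qed.

Section Well2Projections.
Variables (V : finType) (e : rel V) (A : {set V}) (w : V) (s : {perm V}).
Hypothesis s_well : well2 e A w s.

Lemma well2_mem : w \in A.
Proof. by case: s_well => _ [h _]. Qed.
Lemma well2_on : perm_on A s.
Proof. by case: s_well => _ [_ [h _]]. Qed.
Lemma well2_fpf : {in A, forall y, s y != y}.
Proof. by case: s_well => _ [_ [_ [h _]]]. Qed.
Lemma well2_place a b : ind e A a b -> ~~ ind e A (s a) (s b).
Proof. by case: s_well => _ [_ [_ [_ [h _]]]]; apply: h. Qed.
Lemma well2_S6 a b : ind e A a b -> dist_le e A 6 (s a) (s b).
Proof. by case: s_well => _ [_ [_ [_ [_ [h _]]]]]; apply: h. Qed.
Lemma well2_root : dist_le e A 2 w (s w).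
Proof. by case: s_well => _ [_ [_ [_ [_ [_ [h _]]]]]]. Qed.
Lemma well2_nbr y : ind e A w y -> dist_le e A 3 y (s y).
Proof. by case: s_well => _ [_ [_ [_ [_ [_ [_ [h _]]]]]]]; apply: h. Qed.
Lemma well2_leaf y : y \in A -> deg e A y = 1 -> dist_le e A 4 y (s y).
Proof. by case: s_well => _ [_ [_ [_ [_ [_ [_ [_ [h _]]]]]]]]; apply: h. Qed.
Lemma well2_cycle : {in A, forall y, #|porbit s y| <= 5}.
Proof. by case: s_well => _ [_ [_ [_ [_ [_ [_ [_ [_ h]]]]]]]]. Qed.

End Well2Projections.

Section Decomposition.
Variables (V : finType) (e : rel V).
Hypotheses (e_sym : symmetric e) (e_irr : irreflexive e) (e_tree : is_tree e [set: V]).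
Variables (x : V) (X : {set V}).
Hypothesis X_nbr : X \subset [set y | e x y].

Local Notation core := (component (rem_edges e x X) x).
Local Notation branch a := (component (rem_edge e a x) a).

Lemma X_adj a : a \in X -> e x a.
Proof. by move=> aX; move/subsetP: X_nbr => /(_ a aX); rewrite inE. Qed.

Lemma X_neq_x a : a \in X -> a != x.
Proof. by move=> aX; apply: contraTneq (X_adj aX) => ->; rewrite e_irr. Qed.

Lemma x_in_core : x \in core.
Proof. by rewrite inE connect0. Qed.

Lemma branch_root a : a \in branch a.
Proof. by rewrite inE connect0. Qed.

Lemma x_notin_branch a : a \in X -> x \notin branch a.
Proof.
by move=> aX; rewrite inE; apply/negP; apply: tree_bridge; rewrite // e_sym X_adj.
Qed.

Lemma branch_avoids_x a v : a \in X -> v \in branch a -> connect (del_vertex e x) a v.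
Proof.
move=> aX; rewrite inE => /connectP [p Hp ->].
have xp : x \notin a :: p.
  apply/negP => /(path_connect Hp) => H.
  by move: (x_notin_branch aX); rewrite inE H.
apply/connectP; exists p => //; apply: path_del_vertex xp.
by apply: sub_path Hp => u w /andP[].
Qed.

(* The core meets no branch: a common vertex would join a to x without the
   edge a x. *)
Lemma core_branch_disjoint a v : a \in X -> v \in branch a -> v \notin core.
Proof.
move=> aX; rewrite !inE => av; apply/negP => xv.
have xv' : connect (rem_edge e a x) x v.
  apply: connect_sub xv => u w /andP[euw cut]; apply: connect1.
  rewrite /rem_edge euw /=; apply: contra cut.
  by case/orP=> /andP[/eqP-> /eqP->]; rewrite eqxx aX ?andbT ?orbT.
have eax : e a x by rewrite e_sym X_adj.
apply: (tree_bridge e_sym e_irr e_tree eax); apply: connect_trans av _.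
by rewrite (sym_connect_sym (rem_edge_sym a x e_sym)).
Qed.

(* Distinct branches are disjoint: otherwise a and b would be joined
   without x, closing a cycle with the edges ax and xb. *)
Lemma branch_disjoint a b v :
  a \in X -> b \in X -> v \in branch a -> v \in branch b -> a = b.
Proof.
move=> aX bX va vb; case: (eqVneq a b) => [//|nab]; exfalso.
have eax : e a x by rewrite e_sym X_adj.
apply: (tree_bridge e_sym e_irr e_tree eax).
have del_sub : subrel (del_vertex e x) (rem_edge e a x).
  by move=> u w /and3P[h ux wx]; rewrite /rem_edge h /= (negbTE ux) (negbTE wx) !andbF.
have ab : connect (del_vertex e x) a b.
  apply: connect_trans (branch_avoids_x aX va) _.
  by rewrite (sym_connect_sym (del_vertex_sym x e_sym)) branch_avoids_x.
apply: connect_trans (connect_sub (fun u w h => connect1 (del_sub u w h)) ab) _.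
apply: connect1; rewrite /rem_edge e_sym X_adj //= eq_sym (negbTE nab) /=.
by rewrite [x == a]eq_sym (negbTE (X_neq_x aX)) andbF.
Qed.

(* Every vertex lies in the core or in a branch: follow a shortest path
   from x and look at its first step. *)
Lemma core_branch_cover v : v \in core \/ exists2 a, a \in X & v \in branch a.
Proof.
case/connectP: (tree_connect e_tree x v) => p Hp Hl.
move: Hl; case: (shortenP Hp) => {Hp} p Hp Hu _ ->.
case: p Hp Hu => [|y q] /=; first by left; rewrite x_in_core.
case/andP => exy Hq /andP[]; rewrite in_cons negb_or => /andP[xy xq] _.
have Hg : path (del_vertex e x) y q.
  by apply: path_del_vertex Hq _; rewrite in_cons negb_or xy xq.
case: (boolP (y \in X)) => yX.
- right; exists y => //; rewrite inE; apply/connectP; exists q => //.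
  apply: sub_path Hg => u w /and3P[h ux wx].
  by rewrite /rem_edge h /= (negbTE ux) (negbTE wx) !andbF.
- left; rewrite inE; apply/connectP; exists (y :: q) => //=.
  rewrite /rem_edges exy eqxx (negbTE yX) /= eq_sym (negbTE xy) /=.
  apply: sub_path Hg => u w /and3P[h ux wx].
  by rewrite /rem_edges h /= (negbTE ux) (negbTE wx).
Qed.

Lemma core_closed y w :
  y \in core -> e y w -> ~~ ((y == x) && (w \in X)) -> w \in core.
Proof.
rewrite !inE => xy eyw not_cut; apply: (connect_trans xy) (connect1 _).
rewrite /rem_edges eyw /= negb_or not_cut /=; apply/negP => /andP[_ yX].
by move: (core_branch_disjoint yX (branch_root y)); rewrite inE xy.
Qed.

Lemma branch_closed a y w :
  a \in X -> y \in branch a -> e y w -> ~~ ((y == a) && (w == x)) -> w \in branch a.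
Proof.
move=> aX ya; move: (ya); rewrite !inE => ay eyw not_cut.
apply: connect_trans ay (connect1 _).
rewrite /rem_edge eyw /= negb_or not_cut /=; apply/negP => /andP[/eqP yx _].
by move: ya; rewrite yx (negbTE (x_notin_branch aX)).
Qed.

Lemma edge_cases u w : e u w ->
  [\/ u \in core /\ w \in core,
      exists2 a, a \in X & (u \in branch a /\ w \in branch a),
      exists2 a, a \in X & (u = x /\ w = a) |
      exists2 a, a \in X & (u = a /\ w = x)].
Proof.
move=> euw; case: (core_branch_cover u) => [uC|[a aX ua]].
- case: (boolP ((u == x) && (w \in X))) => [/andP[/eqP-> wX]|not_cut].
    by constructor 3; exists w.
  by constructor 1; split => //; apply: core_closed uC euw not_cut.
- case: (boolP ((u == a) && (w == x))) => [/andP[/eqP-> /eqP->]|not_cut].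
    by constructor 4; exists a.
  by constructor 2; exists a => //; split => //; apply: branch_closed aX ua euw not_cut.
Qed.

Variables (s : {perm V}) (F : V -> {perm V}).
Hypotheses (s_on : perm_on core s) (F_on : forall a, a \in X -> perm_on (branch a) (F a)).

Definition glue_fun (v : V) : V :=
  if v \in core then s v
  else if [pick a in X | v \in branch a] is Some a then F a v else v.

Lemma glue_fun_core v : v \in core -> glue_fun v = s v.
Proof. by rewrite /glue_fun => ->. Qed.

Lemma glue_fun_branch a v : a \in X -> v \in branch a -> glue_fun v = F a v.
Proof.
move=> aX va; rewrite /glue_fun (negbTE (core_branch_disjoint aX va)).
case: pickP => [b /andP[bX vb]|/(_ a)]; last by rewrite aX va.
by rewrite (branch_disjoint bX aX vb va).
Qed.

(* Each piece is mapped onto itself, and pieces are disjoint. *)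
Lemma glue_fun_inj : injective glue_fun.
Proof.
have FB a v : a \in X -> v \in branch a -> F a v \in branch a.
  by move=> aX va; rewrite perm_closed // F_on.
have sC v : v \in core -> s v \in core by move=> vC; rewrite perm_closed.
move=> u w; case: (core_branch_cover u) => [uC|[a aX ua]];
  case: (core_branch_cover w) => [wC|[b bX wb]].
- by rewrite !glue_fun_core //; apply: perm_inj.
- rewrite glue_fun_core // (glue_fun_branch bX wb) => suw.
  by move: (core_branch_disjoint bX (FB b w bX wb)); rewrite -suw sC.
- rewrite (glue_fun_core wC) (glue_fun_branch aX ua) => Fsw.
  by move: (core_branch_disjoint aX (FB a u aX ua)); rewrite Fsw sC.
- rewrite (glue_fun_branch aX ua) (glue_fun_branch bX wb) => Fuw.
  have ab : a = b by apply: (branch_disjoint aX bX (FB a u aX ua)); rewrite Fuw FB.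
  by subst b; move: Fuw; apply: perm_inj.
Qed.

Definition glue : {perm V} := perm glue_fun_inj.

Lemma glue_core v : v \in core -> glue v = s v.
Proof. by rewrite permE; apply: glue_fun_core. Qed.

Lemma glue_branch a v : a \in X -> v \in branch a -> glue v = F a v.
Proof. by rewrite permE; apply: glue_fun_branch. Qed.

Variable z : V.
Hypotheses (s_well : well2 e core z s)
           (F_well : forall a, a \in X -> well2 e (branch a) a (F a))
           (x_moved : dist_le e core 3 x (s x)).

Lemma glue_fpf : {in [set: V], forall y, glue y != y}.
Proof.
move=> y _; case: (core_branch_cover y) => [yC|[a aX ya]].
  by rewrite glue_core //; apply: (well2_fpf s_well).
by rewrite (glue_branch aX ya); apply: (well2_fpf (F_well aX)).
Qed.

(* The images of the ends of a cut edge x a lie in different pieces, hence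
   are not adjacent ... *)
Lemma cut_image_not_adj a : a \in X -> ~~ e (s x) (F a a).
Proof.
move=> aX; have sxC : s x \in core by rewrite perm_closed // x_in_core.
have FaB : F a a \in branch a by rewrite perm_closed ?branch_root ?F_on.
apply/negP => /edge_cases [[_ FaC]|[b bX [sxB _]]|[b bX [sxx _]]|[b bX [sxb _]]].
- by move: (core_branch_disjoint aX FaB); rewrite FaC.
- by move: (core_branch_disjoint bX sxB); rewrite sxC.
- by move: (well2_fpf s_well x_in_core); rewrite sxx eqxx.
- by move: (core_branch_disjoint bX (branch_root b)); rewrite -sxb sxC.
Qed.

(* ... and they are at distance at most 3 + 1 + 2 = 6. *)
Lemma cut_image_dist a : a \in X -> dist_le e [set: V] 6 (s x) (F a a).
Proof.
move=> aX; have sx_x := dist_le_sym e_sym (dist_le_widen (leqnn 3) x_moved).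
have a_Fa := dist_le_widen (leqnn 2) (well2_root (F_well aX)).
exact: dist_le_trans (dist_le_trans sx_x (dist_le_edge (X_adj aX))) a_Fa.
Qed.

(* Condition (1): inside a piece it is inherited, across a cut edge it is
   cut_image_not_adj. *)
Lemma glue_place u w : ind e [set: V] u w -> ~~ ind e [set: V] (glue u) (glue w).
Proof.
rewrite !ind_setT => euw.
case/edge_cases: (euw) => [[uC wC]|[a aX [ua wa]]|[a aX [-> ->]]|[a aX [-> ->]]].
- rewrite !glue_core //.
  move: (well2_place s_well (a := u) (b := w)).
  by rewrite !ind_in ?(perm_closed _ s_on) //; apply.
- rewrite (glue_branch aX ua) (glue_branch aX wa).
  move: (well2_place (F_well aX) (a := u) (b := w)).
  by rewrite !ind_in ?(perm_closed _ (F_on aX)) //; apply.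
- by rewrite (glue_core x_in_core) (glue_branch aX (branch_root a)) cut_image_not_adj.
- rewrite (glue_core x_in_core) (glue_branch aX (branch_root a)) e_sym.
  exact: cut_image_not_adj.
Qed.

(* Condition (2): inside a piece distances only grow in T; cut edges use
   cut_image_dist. *)
Lemma glue_S6 u w : ind e [set: V] u w -> dist_le e [set: V] 6 (glue u) (glue w).
Proof.
rewrite ind_setT => euw.
case/edge_cases: (euw) => [[uC wC]|[a aX [ua wa]]|[a aX [-> ->]]|[a aX [-> ->]]].
- rewrite !glue_core //; apply: dist_le_widen (leqnn 6) (well2_S6 s_well _).
  by rewrite ind_in.
- rewrite (glue_branch aX ua) (glue_branch aX wa).
  by apply: dist_le_widen (leqnn 6) (well2_S6 (F_well aX) _); rewrite ind_in.
- rewrite (glue_core x_in_core) (glue_branch aX (branch_root a)).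
  exact: cut_image_dist.
- rewrite (glue_core x_in_core) (glue_branch aX (branch_root a)).
  exact: (dist_le_sym e_sym (cut_image_dist aX)).
Qed.

(* Condition (3): z lies in the core. *)
Lemma glue_root : dist_le e [set: V] 2 z (glue z).
Proof.
by rewrite glue_core ?(well2_mem s_well) //; apply: dist_le_widen (well2_root s_well).
Qed.

(* Condition (4): a neighbour of z is in the core, or z = x and the neighbour
   is a branch root a, moved by at most 2 by condition (3) for F a. *)
Lemma glue_nbr y : ind e [set: V] z y -> dist_le e [set: V] 3 y (glue y).
Proof.
have zC := well2_mem s_well; rewrite ind_setT => ezy.
case/edge_cases: (ezy) => [[_ yC]|[a aX [za _]]|[a aX [_ ->]]|[a aX [za _]]].
- rewrite glue_core //; apply: dist_le_widen (leqnn 3) (well2_nbr s_well _).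
  by rewrite ind_in.
- by move: (core_branch_disjoint aX za); rewrite zC.
- rewrite (glue_branch aX (branch_root a)).
  exact: dist_le_widen _ (well2_root (F_well aX)).
- by move: (core_branch_disjoint aX (branch_root a)); rewrite -za zC.
Qed.

(* Condition (5): x and the branch roots move by at most 3; any other leaf of
   T is a leaf of its piece, since it keeps all its neighbours there. *)
Lemma glue_leaf y : y \in [set: V] -> deg e [set: V] y = 1 ->
  dist_le e [set: V] 4 y (glue y).
Proof.
move=> _ leaf_y; case: (core_branch_cover y) => [yC|[a aX ya]].
- rewrite glue_core //; have [->|yx] := eqVneq y x.
    exact: dist_le_widen _ x_moved.
  apply: dist_le_widen (leqnn 4) (well2_leaf s_well yC _).
  rewrite (deg_closed yC) // => w eyw.
  by apply: core_closed yC eyw _; rewrite (negbTE yx).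
- rewrite (glue_branch aX ya); have [ay|ya'] := eqVneq y a.
    by subst y; apply: dist_le_widen _ (well2_root (F_well aX)).
  apply: dist_le_widen (leqnn 4) (well2_leaf (F_well aX) ya _).
  rewrite (deg_closed ya) // => w eyw.
  by apply: branch_closed aX ya eyw _; rewrite (negbTE ya').
Qed.

(* Condition (6): every cycle of glue is a cycle of s or of some F a. *)
Lemma glue_cycle : {in [set: V], forall y, #|porbit glue y| <= 5}.
Proof.
move=> y _; case: (core_branch_cover y) => [yC|[a aX ya]].
- rewrite (porbit_agree s_on _ yC); first exact: (well2_cycle s_well yC).
  by move=> v vC; rewrite glue_core.
- rewrite (porbit_agree (F_on aX) _ ya); first exact: (well2_cycle (F_well aX) ya).
  by move=> v va; rewrite (glue_branch aX va).
Qed.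

Lemma glue_well2 : nonstar_tree e [set: V] -> well2 e [set: V] z glue.
Proof.
move=> T_nonstar; split; first exact: T_nonstar.
split; first exact: in_setT.
split; first by apply/subsetP => v _; rewrite in_setT.
split; first exact: glue_fpf.
split; first exact: glue_place.
split; first exact: glue_S6.
split; first exact: glue_root.
split; first exact: glue_nbr.
split; first exact: glue_leaf.
exact: glue_cycle.
Qed.

End Decomposition.

Theorem lemma3p4 (V : finType) (e : rel V)
  (e_sym : symmetric e) (e_irr : irreflexive e)
  (HT : nonstar_tree e [set: V])
  (x : V) (X : {set V})
  (Hn : 2 <= #|[set y | e x y]|)
  (HX : X \subset [set y | e x y])
  (Hp1 : 0 < #|X|) (Hpn : #|X| < #|[set y | e x y]|)
  (Hsub : forall xi, xi \in X ->
     exists s : {perm V}, well2 e (component (rem_edge e xi x) xi) xi s)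
  (z : V) (s : {perm V})
  (Hz : z \in component (rem_edges e x X) x)
  (Hs : well2 e (component (rem_edges e x X) x) z s)
  (Hx : dist_le e (component (rem_edges e x X) x) 3 x (s x)) :
  exists sz : {perm V},
    well2 e [set: V] z sz /\
    {in component (rem_edges e x X) x, forall v, sz v = s v}.
Proof.
have T_tree := proj1 HT.
have /fin_all_exists [F F_well] : forall a, exists t : {perm V},
    a \in X -> well2 e (component (rem_edge e a x) a) a t.
  move=> a; have [aX|_] := boolP (a \in X); last by exists 1%g.
  by have [t t_well] := Hsub a aX; exists t.
have F_on a : a \in X -> perm_on (component (rem_edge e a x) a) (F a).
  by move=> aX; apply: well2_on (F_well a aX).
exists (glue e_sym e_irr T_tree HX (well2_on Hs) F_on); split.
  exact: glue_well2 Hs F_well Hx HT.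
by move=> v vC; rewrite glue_core.
Qed.
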